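(* Let $\Gamma$ be a strongly $\delta$-hyperbolic directed graph (real $\delta\ge0$). Then every directed geodesic triangle $T$ in $\Gamma$ can be tessellated by five directed geodesic triangles (some of which may be trivial triangles with a single vertex), each of size at most $\frac{3}{4}\Sigma(T)+2\delta+1$.
   Context: Directed graphs may have loops and multiple edges; $d(u,v)$ is the length of a shortest directed path from $u$ to $v$ ($\infty$ if none). Out-ball $\overrightarrow{\mathcal{B}}_r(x)=\{y : d(x,y)\le r\}$, in-ball $\overleftarrow{\mathcal{B}}_r(x)=\{y : d(y,x)\le r\}$, extended to sets by union. A path $[x_0,\dots,x_n]$ has length $n$ and is a geodesic if $n=d(x_0,x_n)$. Paths are composable if the end of the first is the start of the second ($\circ$ is concatenation) and parallel if they share start and end. A directed geodesic triangle is an ordered triple $(p,q,r)$ of geodesics with $p,q$ composable and $p\circ q$ parallel to $r$; its size is $\Sigma(p,q,r)=|p|+|q|$. It is $\delta$-thin if every vertex of $r$ lies in $\overrightarrow{\mathcal{B}}_\delta(p)\cup\overleftarrow{\mathcal{B}}_\delta(q)$, every vertex of $p$ lies in $\overrightarrow{\mathcal{B}}_\delta(r)\cup\overleftarrow{\mathcal{B}}_\delta(q)$, and every vertex of $q$ lies in $\overrightarrow{\mathcal{B}}_\delta(p)\cup\overleftarrow{\mathcal{B}}_\delta(r)$. A directed graph is strongly $\delta$-hyperbolic if all its directed geodesic triangles are $\delta$-thin. Tessellation: given directed geodesic triangles $T_i=(p_i,q_i,r_i)$, form the directed $2$-complex on $\Gamma$ with one $2$-cell per $T_i$ having top $p_i\circ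 q_i$ and bottom $r_i$ (plus its formal inverse swapping top and bottom). Parallel paths are homotopic if one can be transformed into the other by finitely many steps each replacing a subpath equal to the top of a $2$-cell by its bottom or vice versa. The $T_i$ tessellate parallel paths $p,q$ if $p,q$ are homotopic in this complex, and tessellate a triangle $(p,q,r)$ if they tessellate $p\circ q$ and $r$. *)

(* Directed graphs given by an adjacency relation on an arbitrary
   (possibly infinite) vertex type; paths are vertex sequences [x_0; ...; x_n]. *)
From Stdlib Require Export Reals List Relations.
Export ListNotations.
Open Scope R_scope.

Section Graph.
Variables (V : Type) (adj : V -> V -> Prop).

Inductive walk : list V -> Prop :=
| walk1 x : walk [x]
| walkS x y p : adj x y -> walk (y :: p) -> walk (x :: y :: p).

Definition plen (p : list V) : nat := (length p - 1)%nat.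
Definition pfirst (p : list V) (x : V) : Prop := exists t, p = x :: t.
Definition plast (p : list V) (x : V) : Prop := exists t, p = t ++ [x].

Definition dist_le (x y : V) (n : nat) : Prop :=
  exists p, walk p /\ pfirst p x /\ plast p y /\ (plen p <= n)%nat.
(* d(x,y) <= r for real r (false if d = infinity) *)
Definition dist_leR (x y : V) (r : R) : Prop :=
  exists n : nat, dist_le x y n /\ INR n <= r.

Definition geodesic (p : list V) : Prop :=
  walk p /\ forall x y q, pfirst p x -> plast p y ->
    walk q -> pfirst q x -> plast q y -> (plen p <= plen q)%nat.

Definition composable (p q : list V) : Prop :=
  exists x, plast p x /\ pfirst q x.
Definition parallel (p q : list V) : Prop :=
  exists x y, pfirst p x /\ pfirst q x /\ plast p y /\ plast q y.
Definition pconcat (p q : list V) : list V := p ++ tl q.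

Definition geo_triangle (p q r : list V) : Prop :=
  geodesic p /\ geodesic q /\ geodesic r /\ composable p q /\
  parallel (pconcat p q) r.

Definition tsize (p q r : list V) : nat := (plen p + plen q)%nat.

Definition out_ball_set (d : R) (A : list V) (v : V) : Prop :=
  exists y, In y A /\ dist_leR y v d.
Definition in_ball_set (d : R) (A : list V) (v : V) : Prop :=
  exists y, In y A /\ dist_leR v y d.

Definition thin (d : R) (p q r : list V) : Prop :=
  (forall v, In v r -> out_ball_set d p v \/ in_ball_set d q v) /\
  (forall v, In v p -> out_ball_set d r v \/ in_ball_set d q v) /\
  (forall v, In v q -> out_ball_set d p v \/ in_ball_set d r v).

Definition strongly_hyperbolic (d : R) : Prop :=
  forall p q r, geo_triangle p q r -> thin d p q r.

(* elementary homotopy step in the directed 2-complex with one 2-cell per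
   triangle (top p o q, bottom r) and its formal inverse *)
Inductive hstep (Ts : list (list V * list V * list V)) : list V -> list V -> Prop :=
| hstep_down a b p q r : In (p, q, r) Ts ->
    hstep Ts (a ++ pconcat p q ++ b) (a ++ r ++ b)
| hstep_up a b p q r : In (p, q, r) Ts ->
    hstep Ts (a ++ r ++ b) (a ++ pconcat p q ++ b).

Definition homotopic (Ts : list (list V * list V * list V)) (w w' : list V) : Prop :=
  clos_refl_trans (list V) (hstep Ts) w w'.

Definition tessellates_triangle (Ts : list (list V * list V * list V))
  (p q r : list V) : Prop := homotopic Ts (pconcat p q) r.

End Graph.

Arguments walk {V} adj _.
Arguments dist_le {V} adj _ _ _.
Arguments dist_leR {V} adj _ _ _.
Arguments geodesic {V} adj _.
Arguments geo_triangle {V} adj _ _ _.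
Arguments thin {V} adj _ _ _ _.
Arguments strongly_hyperbolic {V} adj _.
Arguments tsize {V} _ _ _.
Arguments plen {V} _.
Arguments hstep {V} _ _ _.
Arguments homotopic {V} _ _ _.
Arguments tessellates_triangle {V} _ _ _ _.

(* Assume |q| <= |p|; otherwise reverse every edge, which turns (p, q, r) into the
   triangle (rev q, rev p, rev r) of the reversed graph, again strongly delta-hyperbolic.
   Let v be the midpoint of p = [x, y] and S = |p| + |q|. By thinness v is delta-close
   either to a vertex w of q, or from a vertex u of r. In the first case the chord [v, w]
   and a geodesic [x, w] cut the triangle into three triangles of size at most
   3S/4 + delta + 1 (this uses |q| <= |p|). In the second case the chord [u, v] does the
   same unless d(x, u) > S/4. Then let m be the vertex of [x, u] with d(x, m) = S/4 and
   apply thinness to the triangle ([x, u], [u, v], [x, v]) at m: either m is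
   delta-close from a vertex u' of [x, v], and the chord [u', m] cuts off the triangle
   ([x, u'], [u', m], [x, m]) while the two remaining cells each miss a piece of length
   at least S/4 - delta of the boundary; or m is delta-close to a vertex of [u, v],
   which yields a chord [m, v] of length at most 2 delta playing the role of [u, v].
   Each tessellation has three cells, which are padded to five. *)

From Stdlib Require Import Lia Lra Classical Arith.

Arguments pconcat {V} _ _.
Arguments pfirst {V} _ _.
Arguments plast {V} _ _.
Arguments composable {V} _ _.
Arguments out_ball_set {V} _ _ _ _.
Arguments in_ball_set {V} _ _ _ _.

Section Paths.
Context {V : Type} (adj : V -> V -> Prop).
Implicit Types (P Q R W : list V) (x y z v : V).

Definition joins P x y : Prop := pfirst P x /\ plast P y.
Definition walk_between P x y : Prop := walk adj P /\ joins P x y.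
Definition geodesic_between P x y : Prop := geodesic adj P /\ joins P x y.

Lemma pfirst_inj P x y : pfirst P x -> pfirst P y -> x = y.
Proof. intros [t ->] [s H]; now inversion H. Qed.

Lemma plast_inj P x y : plast P x -> plast P y -> x = y.
Proof. intros [t ->] [s H]; now apply app_inj_tail in H as [_ ->]. Qed.

Lemma pfirst_nonnil P x : pfirst P x -> P <> [].
Proof. now intros [t ->]. Qed.

Lemma pfirst_cons_iff a t x : pfirst (a :: t) x <-> a = x.
Proof. split; [intros [s H]; now inversion H | intros ->; now exists t]. Qed.

Lemma plast_app_r (A L : list V) z : L <> [] -> plast (A ++ L) z -> plast L z.
Proof.
  intros HL [t Ht]; destruct (exists_last HL) as [l [a ->]].
  rewrite app_assoc in Ht; apply app_inj_tail in Ht as [_ ->]; now exists l.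
Qed.

Lemma pconcat_glue (A B : list V) v : pconcat (A ++ [v]) (v :: B) = A ++ v :: B.
Proof. unfold pconcat; simpl; now rewrite <- app_assoc. Qed.

Lemma pconcat_assoc P Q R : Q <> [] -> pconcat (pconcat P Q) R = pconcat P (pconcat Q R).
Proof.
  destruct Q as [|w Q]; [congruence|]; intros _.
  unfold pconcat; simpl; now rewrite <- app_assoc.
Qed.

Lemma plen_pconcat P Q : P <> [] -> Q <> [] -> plen (pconcat P Q) = (plen P + plen Q)%nat.
Proof.
  destruct P as [|a P], Q as [|b Q]; try congruence; intros _ _.
  unfold plen, pconcat; simpl; rewrite length_app; lia.
Qed.

Lemma pfirst_pconcat P Q x : pfirst P x -> pfirst (pconcat P Q) x.
Proof. intros [t ->]; now exists (t ++ tl Q). Qed.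

Lemma joins_pconcat P Q x y z : joins P x y -> joins Q y z -> joins (pconcat P Q) x z.
Proof.
  intros [Px [A ->]] [[B ->] [C HC]]; split; [now apply pfirst_pconcat|].
  exists (A ++ C); rewrite pconcat_glue, HC; now rewrite <- app_assoc.
Qed.

Lemma in_pconcat_last P Q v : plast P v -> In v (pconcat P Q).
Proof. intros [A ->]; apply in_or_app; left; apply in_or_app; right; now left. Qed.

Lemma walk_cons2_iff x y P : walk adj (x :: y :: P) <-> adj x y /\ walk adj (y :: P).
Proof. split; [intros H; now inversion H | intros [H1 H2]; now constructor]. Qed.

Lemma walk_app_iff (A B : list V) v :
  walk adj (A ++ v :: B) <-> walk adj (A ++ [v]) /\ walk adj (v :: B).
Proof.
  induction A as [|a [|a' A] IH]; simpl in *.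
  - split; [split; [constructor | assumption] | tauto].
  - rewrite !walk_cons2_iff; pose proof (walk1 _ adj v); tauto.
  - rewrite !walk_cons2_iff, IH; tauto.
Qed.

Lemma walk_between_nonnil P x y : walk_between P x y -> P <> [].
Proof. intros [_ [HP _]]; eapply pfirst_nonnil; eauto. Qed.

Lemma walk_between_pconcat P Q x y z :
  walk_between P x y -> walk_between Q y z -> walk_between (pconcat P Q) x z.
Proof.
  intros [HP JP] [HQ JQ]; split; [|eapply joins_pconcat; eauto].
  destruct JP as [_ [A ->]], JQ as [[B ->] _].
  rewrite pconcat_glue; now apply walk_app_iff.
Qed.

Lemma geodesic_between_walk P x y : geodesic_between P x y -> walk_between P x y.
Proof. intros [[HP _] J]; now split. Qed.

Lemma geodesic_between_nonnil P x y : geodesic_between P x y -> P <> [].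
Proof. intros gP; eapply walk_between_nonnil, geodesic_between_walk, gP. Qed.

Lemma geodesic_between_le P Q x y :
  geodesic_between P x y -> walk_between Q x y -> (plen P <= plen Q)%nat.
Proof. intros [[_ Hmin] [Px Py]] [HQ [Qx Qy]]; eapply Hmin; eauto. Qed.

Lemma geodesic_between_intro P x y : walk_between P x y ->
  (forall Q, walk_between Q x y -> (plen P <= plen Q)%nat) -> geodesic_between P x y.
Proof.
  intros [HP [Px Py]] Hmin; split; [split; [assumption|] | now split].
  intros x' y' Q Px' Py' HQ Qx' Qy'.
  rewrite <- (pfirst_inj _ _ _ Px Px'), <- (plast_inj _ _ _ Py Py') in *.
  apply Hmin; repeat split; assumption.
Qed.

Lemma geodesic_triangle_ineq P Q R x y z : geodesic_between R x z ->
  walk_between P x y -> walk_between Q y z -> (plen R <= plen P + plen Q)%nat.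
Proof.
  intros gR wP wQ; rewrite <- plen_pconcat; eauto using walk_between_nonnil.
  apply (geodesic_between_le _ _ x z); auto; eapply walk_between_pconcat; eauto.
Qed.

Lemma geodesic_between_exists W x y :
  walk_between W x y -> exists G, geodesic_between G x y /\ (plen G <= plen W)%nat.
Proof.
  remember (plen W) as n eqn:Hn; revert W Hn.
  induction n as [n IH] using lt_wf_ind; intros W Hn HW.
  destruct (classic (exists Q, walk_between Q x y /\ (plen Q < plen W)%nat))
    as [[Q [HQ Hlt]] | Hmin].
  - destruct (IH (plen Q) ltac:(lia) Q eq_refl HQ) as [G [HG Hle]].
    exists G; split; [assumption | lia].
  - exists W; split; [|lia]; apply geodesic_between_intro; [assumption|].
    intros Q HQ; apply Nat.nlt_ge; intros Hlt; apply Hmin; eauto.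
Qed.

Lemma geodesic_between_of_dist x y d :
  dist_leR adj x y d -> exists G, geodesic_between G x y /\ INR (plen G) <= d.
Proof.
  intros [n [[W (HW & Wx & Wy & Hlen)] Hn]].
  destruct (geodesic_between_exists W x y) as [G [HG Hle]]; [repeat split; auto|].
  exists G; split; [assumption|]; apply Rle_trans with (INR n); [apply le_INR; lia | assumption].
Qed.

Lemma geodesic_shortcut P Q x y z : walk_between P x y -> walk_between Q y z ->
  exists G, geodesic_between G x z /\ (plen G <= plen P + plen Q)%nat.
Proof.
  intros wP wQ.
  destruct (geodesic_between_exists (pconcat P Q) x z) as [G [gG HG]];
    [eapply walk_between_pconcat; eauto|].
  exists G; split; [assumption|].
  rewrite plen_pconcat in HG; eauto using walk_between_nonnil.
Qed.

Lemma geodesic_between_app (A B : list V) x v z : geodesic_between (A ++ v :: B) x z ->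
  geodesic_between (A ++ [v]) x v /\ geodesic_between (v :: B) v z.
Proof.
  intros gP.
  assert (wP := geodesic_between_walk _ _ _ gP); destruct wP as [HW [Px [C HC]]].
  apply walk_app_iff in HW as [HA HB].
  assert (JA : joins (A ++ [v]) x v).
  { split; [|now exists A].
    destruct A as [|a A]; simpl in *; rewrite pfirst_cons_iff in *; assumption. }
  assert (JB : joins (v :: B) v z).
  { split; [now exists B|]. apply (plast_app_r A); [discriminate | now exists C]. }
  assert (A_nonnil : A ++ [v] <> []) by now destruct A.
  assert (B_nonnil : v :: B <> []) by discriminate.
  rewrite <- pconcat_glue in gP.
  split; apply geodesic_between_intro; try (split; assumption); intros Q wQ.
  - assert (H := geodesic_between_le _ _ _ _ gP (walk_between_pconcat _ _ _ _ _ wQ (conj HB JB))).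
    rewrite !plen_pconcat in H; eauto using walk_between_nonnil; lia.
  - assert (H := geodesic_between_le _ _ _ _ gP (walk_between_pconcat _ _ _ _ _ (conj HA JA) wQ)).
    rewrite !plen_pconcat in H; eauto using walk_between_nonnil; lia.
Qed.

Lemma geodesic_between_pconcat_inv P Q x v z : geodesic_between (pconcat P Q) x z ->
  plast P v -> pfirst Q v -> geodesic_between P x v /\ geodesic_between Q v z.
Proof. intros gPQ [A ->] [B ->]; rewrite pconcat_glue in gPQ; now apply geodesic_between_app. Qed.

Lemma plen_app_cons (A B : list V) v :
  plen (A ++ v :: B) = (plen (A ++ [v]) + plen (v :: B))%nat.
Proof. unfold plen; rewrite !length_app; simpl; lia. Qed.

Lemma geodesic_between_split_at P x z v : geodesic_between P x z -> In v P ->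
  exists P1 P2, P = pconcat P1 P2 /\ geodesic_between P1 x v /\
    geodesic_between P2 v z /\ plen P = (plen P1 + plen P2)%nat.
Proof.
  intros gP Hv; destruct (in_split v P Hv) as [A [B ->]].
  exists (A ++ [v]), (v :: B); rewrite pconcat_glue, <- plen_app_cons.
  destruct (geodesic_between_app _ _ _ _ _ gP); tauto.
Qed.

Lemma geodesic_between_split_index P x z k : geodesic_between P x z -> (k <= plen P)%nat ->
  exists v P1 P2, P = pconcat P1 P2 /\ geodesic_between P1 x v /\
    geodesic_between P2 v z /\ plen P1 = k /\ plen P = (plen P1 + plen P2)%nat.
Proof.
  intros gP Hk.
  assert (Hlen : (k < length P)%nat)
    by (apply geodesic_between_nonnil in gP; destruct P; [congruence|];
        unfold plen in Hk; simpl in *; lia).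
  destruct (nth_split P x Hlen) as [A [B [HP HA]]].
  remember (nth k P x) as v eqn:Hv; clear Hv; subst P.
  exists v, (A ++ [v]), (v :: B).
  destruct (geodesic_between_app _ _ _ _ _ gP) as [g1 g2].
  rewrite pconcat_glue, (plen_app_cons A B v); repeat (split; [assumption || reflexivity|]).
  split; [unfold plen; rewrite length_app; simpl; lia | reflexivity].
Qed.

Lemma pfirst_pconcat_inv P Q x : P <> [] -> pfirst (pconcat P Q) x -> pfirst P x.
Proof.
  destruct P as [|a P]; [congruence|]; intros _.
  unfold pconcat; simpl; rewrite !pfirst_cons_iff; auto.
Qed.

Lemma geo_triangle_intro p q r x y z : geodesic_between p x y -> geodesic_between q y z ->
  geodesic_between r x z -> geo_triangle adj p q r.
Proof.
  intros [Gp Jp] [Gq Jq] [Gr [rx rz]].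
  destruct (joins_pconcat _ _ _ _ _ Jp Jq) as [pqx pqz].
  refine (conj Gp (conj Gq (conj Gr (conj _ _)))).
  - exists y; split; [apply Jp | apply Jq].
  - exists x, z; tauto.
Qed.

Lemma geo_triangle_elim p q r : geo_triangle adj p q r ->
  exists x y z, geodesic_between p x y /\ geodesic_between q y z /\ geodesic_between r x z.
Proof.
  intros (Gp & Gq & Gr & [y [py qy]] & [x [z (pqx & rx & pqz & rz)]]).
  assert (p_nonnil : p <> []) by (destruct Gp as [Wp _]; inversion Wp; discriminate).
  exists x, y, z.
  refine (conj (conj Gp (conj _ py)) (conj (conj Gq (conj qy _)) (conj Gr (conj rx rz)))).
  - eapply pfirst_pconcat_inv; eauto.
  - destruct py as [A ->], qy as [B ->]; rewrite pconcat_glue in pqz.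
    apply (plast_app_r A); [discriminate | assumption].
Qed.

Lemma plen_rev P : plen (rev P) = plen P.
Proof. unfold plen; now rewrite length_rev. Qed.

Lemma joins_rev P x y : joins P x y -> joins (rev P) y x.
Proof.
  intros [[t ->] [s Hs]]; split.
  - rewrite Hs, rev_app_distr; now exists (rev s).
  - now exists (rev t).
Qed.

Lemma rev_pconcat P Q y : plast P y -> pfirst Q y -> rev (pconcat P Q) = pconcat (rev Q) (rev P).
Proof.
  intros [A ->] [B ->]; rewrite pconcat_glue.
  unfold pconcat; simpl; rewrite !rev_app_distr; simpl; now rewrite <- app_assoc.
Qed.

End Paths.

Lemma walk_rev {V : Type} (adj : V -> V -> Prop) (P : list V) :
  walk adj P -> walk (transp V adj) (rev P).
Proof.
  induction 1 as [x | x y P Hxy HP IH]; [constructor|].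
  simpl; rewrite <- app_assoc; apply (walk_app_iff (transp V adj)).
  split; [exact IH | constructor; [exact Hxy | constructor]].
Qed.

Lemma walk_between_rev {V : Type} (adj : V -> V -> Prop) (P : list V) x y :
  walk_between adj P x y -> walk_between (transp V adj) (rev P) y x.
Proof. intros [HP JP]; split; [apply walk_rev | apply joins_rev]; assumption. Qed.

Section Reversal.
Context {V : Type} (adj : V -> V -> Prop).

Lemma geodesic_between_rev P x y :
  geodesic_between adj P x y -> geodesic_between (transp V adj) (rev P) y x.
Proof.
  intros gP; apply geodesic_between_intro.
  - apply walk_between_rev, geodesic_between_walk, gP.
  - intros Q wQ; rewrite plen_rev, <- (plen_rev Q).
    exact (geodesic_between_le _ _ _ _ _ gP (walk_between_rev (transp V adj) Q y x wQ)).
Qed.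

Lemma geo_triangle_rev p q r :
  geo_triangle adj p q r -> geo_triangle (transp V adj) (rev q) (rev p) (rev r).
Proof.
  intros HT; destruct (geo_triangle_elim adj p q r HT) as (x & y & z & gp & gq & gr).
  eapply geo_triangle_intro; apply geodesic_between_rev; eassumption.
Qed.

Lemma dist_leR_rev x y d : dist_leR adj x y d -> dist_leR (transp V adj) y x d.
Proof.
  intros [n [[P (HP & Px & Py & Hn)] Hd]]; exists n; split; [|assumption].
  destruct (walk_between_rev adj P x y (conj HP (conj Px Py))) as [HP' [Py' Px']].
  exists (rev P); rewrite plen_rev; auto.
Qed.

Lemma out_ball_set_rev d A v :
  out_ball_set adj d (rev A) v -> in_ball_set (transp V adj) d A v.
Proof. intros [w [Hw Hd]]; exists w; rewrite in_rev; auto using dist_leR_rev. Qed.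

Lemma in_ball_set_rev d A v :
  in_ball_set adj d (rev A) v -> out_ball_set (transp V adj) d A v.
Proof. intros [w [Hw Hd]]; exists w; rewrite in_rev; auto using dist_leR_rev. Qed.

End Reversal.

Lemma strongly_hyperbolic_rev {V : Type} (adj : V -> V -> Prop) d :
  strongly_hyperbolic adj d -> strongly_hyperbolic (transp V adj) d.
Proof.
  intros Hh P Q R HT.
  destruct (Hh _ _ _ (geo_triangle_rev (transp V adj) P Q R HT)) as (thinR & thinQ & thinP).
  split; [|split]; intros v Hv; rewrite in_rev in Hv.
  - destruct (thinR v Hv); auto using out_ball_set_rev, in_ball_set_rev.
  - destruct (thinP v Hv); auto using out_ball_set_rev, in_ball_set_rev.
  - destruct (thinQ v Hv); auto using out_ball_set_rev, in_ball_set_rev.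
Qed.

Section Homotopy.
Context {V : Type} (Ts : list (list V * list V * list V)).
Implicit Types (P Q R W X : list V) (x v : V).

Lemma homotopic_sym W W' : homotopic Ts W W' -> homotopic Ts W' W.
Proof.
  induction 1 as [W W' H | | ]; [|apply rt_refl | eapply rt_trans; eauto].
  apply rt_step; destruct H; [apply hstep_up | apply hstep_down]; assumption.
Qed.

Lemma homotopic_cell P Q R : In (P, Q, R) Ts -> homotopic Ts (pconcat P Q) R.
Proof.
  intros HT; apply rt_step.
  rewrite <- (app_nil_r (pconcat P Q)), <- (app_nil_r R).
  exact (hstep_down _ Ts [] [] P Q R HT).
Qed.

Lemma homotopic_app A B W W' : homotopic Ts W W' -> homotopic Ts (A ++ W ++ B) (A ++ W' ++ B).
Proof.
  induction 1 as [W W' H | | ]; [|apply rt_refl | eapply rt_trans; eauto].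
  apply rt_step; destruct H as [a b P Q R HT | a b P Q R HT];
    [ pose proof (hstep_down _ Ts (A ++ a) (b ++ B) P Q R HT) as Hs
    | pose proof (hstep_up _ Ts (A ++ a) (b ++ B) P Q R HT) as Hs ];
    rewrite <- !app_assoc in *; exact Hs.
Qed.

Lemma homotopic_pconcat_r W W' Y : homotopic Ts W W' -> homotopic Ts (pconcat W Y) (pconcat W' Y).
Proof. intros H; exact (homotopic_app [] (tl Y) W W' H). Qed.

Lemma homotopic_pconcat_l X W W' x : plast X x -> pfirst W x -> pfirst W' x ->
  homotopic Ts W W' -> homotopic Ts (pconcat X W) (pconcat X W').
Proof.
  intros [A ->] [B ->] [B' ->] H; rewrite !pconcat_glue.
  rewrite <- (app_nil_r (x :: B)), <- (app_nil_r (x :: B')).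
  now apply homotopic_app.
Qed.

(* In the [homotopic_chord_*] lemmas the chord [g] (or [h]) joins a vertex of one side
   of the triangle to a vertex of another (p to q, r to p, p to r); together with one
   further path [G] it cuts the triangle into the three listed cells. *)
Lemma homotopic_chord_pq P1 P2 Q1 Q2 g G r v :
  plast P1 v -> pfirst P2 v -> pfirst g v -> Q1 <> [] ->
  In (P2, Q1, g) Ts -> In (P1, g, G) Ts -> In (G, Q2, r) Ts ->
  homotopic Ts (pconcat (pconcat P1 P2) (pconcat Q1 Q2)) r.
Proof.
  intros P1v P2v gv Q1_nonnil cell1 cell2 cell3.
  rewrite (pconcat_assoc P1 P2), <- (pconcat_assoc P2 Q1 Q2) by eauto using pfirst_nonnil.
  eapply rt_trans.
  { apply (homotopic_pconcat_l _ (pconcat (pconcat P2 Q1) Q2) (pconcat g Q2) v P1v);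
      auto using pfirst_pconcat.
    apply homotopic_pconcat_r, homotopic_cell, cell1. }
  rewrite <- pconcat_assoc by eauto using pfirst_nonnil.
  eapply rt_trans; [apply homotopic_pconcat_r, homotopic_cell, cell2 | apply homotopic_cell, cell3].
Qed.

Lemma homotopic_chord_rp P1 P2 q R1 R2 h G u v :
  pfirst P2 v -> plast R1 u -> pfirst h u -> pfirst G u -> pfirst R2 u ->
  In (R1, h, P1) Ts -> In (h, P2, G) Ts -> In (G, q, R2) Ts ->
  homotopic Ts (pconcat (pconcat P1 P2) q) (pconcat R1 R2).
Proof.
  intros P2v R1u hu Gu R2u cell1 cell2 cell3.
  eapply rt_trans.
  { apply homotopic_pconcat_r, homotopic_pconcat_r, homotopic_sym, homotopic_cell, cell1. }
  rewrite !pconcat_assoc by eauto using pfirst_nonnil.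
  rewrite <- (pconcat_assoc h P2 q) by eauto using pfirst_nonnil.
  apply (homotopic_pconcat_l _ (pconcat (pconcat h P2) q) R2 u R1u); auto using pfirst_pconcat.
  eapply rt_trans; [apply homotopic_pconcat_r, homotopic_cell, cell2 | apply homotopic_cell, cell3].
Qed.

Lemma homotopic_chord_pr P11 P' q S1 R' g G u :
  plast P11 u -> pfirst P' u -> pfirst g u -> pfirst G u ->
  In (P11, g, S1) Ts -> In (P', q, G) Ts -> In (g, R', G) Ts ->
  homotopic Ts (pconcat (pconcat P11 P') q) (pconcat S1 R').
Proof.
  intros P11u P'u gu Gu cell1 cell2 cell3.
  rewrite pconcat_assoc by eauto using pfirst_nonnil.
  eapply rt_trans.
  { apply (homotopic_pconcat_l _ (pconcat P' q) (pconcat g R') u P11u); auto using pfirst_pconcat.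
    eapply rt_trans; [apply homotopic_cell, cell2 | apply homotopic_sym, homotopic_cell, cell3]. }
  rewrite <- pconcat_assoc by eauto using pfirst_nonnil.
  apply homotopic_pconcat_r, homotopic_cell, cell1.
Qed.

End Homotopy.

Lemma homotopic_incl {V : Type} (Ts Ts' : list (list V * list V * list V)) W W' :
  incl Ts Ts' -> homotopic Ts W W' -> homotopic Ts' W W'.
Proof.
  intros Hincl; induction 1 as [W W' H | | ]; [|apply rt_refl | eapply rt_trans; eauto].
  apply rt_step; destruct H; [apply hstep_down | apply hstep_up]; auto.
Qed.

Definition rev_cell {V : Type} (T : list V * list V * list V) : list V * list V * list V :=
  let '(P, Q, R) := T in (rev Q, rev P, rev R).

Lemma homotopic_rev {V : Type} (Ts : list (list V * list V * list V)) W W' :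
  (forall P Q R, In (P, Q, R) Ts -> composable P Q) ->
  homotopic Ts W W' -> homotopic (map rev_cell Ts) (rev W) (rev W').
Proof.
  intros Hcomp; induction 1 as [W W' H | | ]; [|apply rt_refl | eapply rt_trans; eauto].
  apply rt_step; destruct H as [A B P Q R HT | A B P Q R HT];
    destruct (Hcomp _ _ _ HT) as [y [Py Qy]]; apply (in_map rev_cell) in HT;
    rewrite !rev_app_distr, (rev_pconcat P Q y Py Qy), <- !app_assoc;
    [apply hstep_down | apply hstep_up]; exact HT.
Qed.

Section Tessellation.
Context {V : Type} (adj : V -> V -> Prop).

Definition five_tessellation (bound : R) (p q r : list V) : Prop :=
  exists Ts : list (list V * list V * list V),
    length Ts = 5%nat /\
    (forall p' q' r', In (p', q', r') Ts ->
       geo_triangle adj p' q' r' /\ INR (tsize p' q' r') <= bound) /\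
    tessellates_triangle Ts p q r.

(* Repeating a cell stands in for the trivial one-vertex triangles of the paper. *)
Lemma five_tessellation_of_three bound p q r a1 b1 c1 a2 b2 c2 a3 b3 c3 :
  geo_triangle adj a1 b1 c1 -> INR (tsize a1 b1 c1) <= bound ->
  geo_triangle adj a2 b2 c2 -> INR (tsize a2 b2 c2) <= bound ->
  geo_triangle adj a3 b3 c3 -> INR (tsize a3 b3 c3) <= bound ->
  homotopic [(a1, b1, c1); (a2, b2, c2); (a3, b3, c3)] (pconcat p q) r ->
  five_tessellation bound p q r.
Proof.
  intros G1 B1 G2 B2 G3 B3 Hom.
  exists [(a1, b1, c1); (a2, b2, c2); (a3, b3, c3); (a1, b1, c1); (a1, b1, c1)].
  split; [reflexivity | split].
  - intros p' q' r' HI; simpl in HI.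
    repeat destruct HI as [HI | HI];
      try (injection HI as -> -> ->; split; assumption); contradiction.
  - eapply homotopic_incl; [|exact Hom]; intros T HT; simpl in *; tauto.
Qed.

End Tessellation.

Lemma five_tessellation_rev {V : Type} (adj : V -> V -> Prop) bound p q r y :
  plast p y -> pfirst q y -> five_tessellation (transp V adj) bound (rev q) (rev p) (rev r) ->
  five_tessellation adj bound p q r.
Proof.
  intros [A ->] [B ->] [Ts (Hlen & HTs & Htes)].
  exists (map rev_cell Ts); split; [now rewrite length_map | split].
  - intros p' q' r' HI; apply in_map_iff in HI as [[[a b] c] [E HI]].
    injection E as <- <- <-; destruct (HTs _ _ _ HI) as [Gabc Babc]; split.
    + exact (geo_triangle_rev (transp V adj) a b c Gabc).
    + unfold tsize in *; now rewrite !plen_rev, Nat.add_comm.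
  - apply homotopic_rev in Htes.
    + unfold tessellates_triangle in *.
      rewrite (rev_pconcat _ _ y), !rev_involutive in Htes; [exact Htes | |].
      * simpl; now exists (rev B).
      * rewrite rev_app_distr; now exists (rev A).
    + intros a b c HI; destruct (HTs _ _ _ HI) as [(_ & _ & _ & Hab & _) _]; exact Hab.
Qed.

Lemma size_bound (delta : R) (s S L : nat) : INR L <= 2 * delta ->
  (4 * s <= 3 * S + 4 + 4 * L)%nat -> INR s <= 3 / 4 * INR S + 2 * delta + 1.
Proof.
  intros HL Hs; apply le_INR in Hs; rewrite !plus_INR, !mult_INR in Hs; simpl in Hs; lra.
Qed.

Lemma mul_div_bounds n k : k <> 0%nat -> (k * (n / k) <= n < k * (n / k) + k)%nat.
Proof.
  intros Hk; pose proof (Nat.div_mod_eq n k); pose proof (Nat.mod_upper_bound n k Hk); lia.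
Qed.

Section LongFirstSide.
Context {V : Type} (adj : V -> V -> Prop) (delta : R).
Hypothesis delta_ge0 : 0 <= delta.
Hypothesis hyperbolic : strongly_hyperbolic adj delta.
Variables (x y z : V) (p q r : list V).
Hypotheses (gp : geodesic_between adj p x y) (gq : geodesic_between adj q y z)
  (gr : geodesic_between adj r x z).
Hypothesis q_le_p : (plen q <= plen p)%nat.

Local Notation bound := (3 / 4 * INR (tsize p q r) + 2 * delta + 1).

Local Ltac bound_size_by L :=
  apply (size_bound delta _ _ L); [rewrite ?plus_INR; simpl; lra | unfold tsize in *; lia].

Local Ltac plen_split E :=
  rewrite E; apply plen_pconcat; eauto using geodesic_between_nonnil.

Lemma five_tessellation_chord_pr u m P11 P' S1 R' g :
  p = pconcat P11 P' -> r = pconcat S1 R' ->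
  geodesic_between adj P11 x u -> geodesic_between adj P' u y ->
  geodesic_between adj S1 x m -> geodesic_between adj R' m z ->
  geodesic_between adj g u m -> INR (plen g) <= delta ->
  (2 * plen P11 <= plen p)%nat -> (plen p + plen q <= 4 * plen S1 + 3)%nat ->
  five_tessellation adj bound p q r.
Proof.
  intros Ep Er gP11 gP' gS1 gR' gg Lg HP11 HS1.
  assert (Hp : plen p = (plen P11 + plen P')%nat) by plen_split Ep.
  assert (Hr : plen r = (plen S1 + plen R')%nat) by plen_split Er.
  assert (Hpq : (plen r <= plen p + plen q)%nat)
    by (eapply geodesic_triangle_ineq; eauto using geodesic_between_walk).
  assert (HS1g : (plen S1 <= plen P11 + plen g)%nat)
    by (eapply geodesic_triangle_ineq; eauto using geodesic_between_walk).
  destruct (geodesic_shortcut adj P' q u y z) as [G [gG _]]; eauto using geodesic_between_walk.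
  apply (five_tessellation_of_three _ _ _ _ _ P11 g S1 P' q G g R' G).
  - eapply geo_triangle_intro; eauto.
  - bound_size_by (plen g).
  - eapply geo_triangle_intro; eauto.
  - bound_size_by (plen g).
  - eapply geo_triangle_intro; eauto.
  - bound_size_by (plen g).
  - unfold tessellates_triangle; rewrite Ep, Er.
    destruct gP11 as (_ & _ & ?), gP' as (_ & ? & _), gg as (_ & ? & _), gG as (_ & ? & _).
    apply (homotopic_chord_pr _ P11 P' q S1 R' g G u); simpl; auto.
Qed.

Section Midpoint.
Variables (v : V) (P1 P2 : list V).
Hypotheses (Ep : p = pconcat P1 P2) (gP1 : geodesic_between adj P1 x v)
  (gP2 : geodesic_between adj P2 v y).
Hypothesis P1_half : (2 * plen P1 <= plen p <= 2 * plen P1 + 1)%nat.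

Lemma five_tessellation_chord_pq w : In w q -> dist_leR adj v w delta ->
  five_tessellation adj bound p q r.
Proof.
  intros Hw Hvw.
  destruct (geodesic_between_of_dist adj v w delta Hvw) as [g [gg Lg]].
  destruct (geodesic_between_split_at adj q y z w gq Hw) as (Q1 & Q2 & Eq & gQ1 & gQ2 & Hq).
  destruct (geodesic_shortcut adj P1 g x v w) as [G [gG LG]]; eauto using geodesic_between_walk.
  assert (Hp : plen p = (plen P1 + plen P2)%nat) by plen_split Ep.
  apply (five_tessellation_of_three _ _ _ _ _ P2 Q1 g P1 g G G Q2 r).
  - eapply geo_triangle_intro; eauto.
  - bound_size_by 0%nat.
  - eapply geo_triangle_intro; eauto.
  - bound_size_by (plen g).
  - eapply geo_triangle_intro; eauto.
  - bound_size_by (plen g).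
  - unfold tessellates_triangle; rewrite Ep, Eq.
    destruct gP1 as (_ & _ & ?), gP2 as (_ & ? & _), gg as (_ & ? & _).
    apply (homotopic_chord_pq _ P1 P2 Q1 Q2 g G r v); simpl;
      eauto using geodesic_between_nonnil.
Qed.

Lemma five_tessellation_chord_rp u R1 R2 g :
  r = pconcat R1 R2 -> geodesic_between adj R1 x u -> geodesic_between adj R2 u z ->
  geodesic_between adj g u v -> INR (plen g) <= 2 * delta ->
  (4 * plen R1 <= plen p + plen q)%nat -> five_tessellation adj bound p q r.
Proof.
  intros Er gR1 gR2 gg Lg HR1.
  destruct (geodesic_shortcut adj g P2 u v y) as [G [gG LG]]; eauto using geodesic_between_walk.
  assert (Hp : plen p = (plen P1 + plen P2)%nat) by plen_split Ep.
  apply (five_tessellation_of_three _ _ _ _ _ R1 g P1 g P2 G G q R2).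
  - eapply geo_triangle_intro; eauto.
  - bound_size_by (plen g).
  - eapply geo_triangle_intro; eauto.
  - bound_size_by (plen g).
  - eapply geo_triangle_intro; eauto.
  - bound_size_by (plen g).
  - unfold tessellates_triangle; rewrite Ep, Er.
    destruct gP2 as (_ & ? & _), gR1 as (_ & _ & ?), gR2 as (_ & ? & _),
      gg as (_ & ? & _), gG as (_ & ? & _).
    apply (homotopic_chord_rp _ P1 P2 q R1 R2 g G u v); simpl; auto.
Qed.

Lemma five_tessellation_far_r u R1 R2 g :
  r = pconcat R1 R2 -> geodesic_between adj R1 x u -> geodesic_between adj R2 u z ->
  geodesic_between adj g u v -> INR (plen g) <= delta ->
  (plen p + plen q < 4 * plen R1)%nat -> five_tessellation adj bound p q r.
Proof.
  intros Er gR1 gR2 gg Lg R1_long.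
  set (J := ((plen p + plen q) / 4)%nat).
  pose proof (mul_div_bounds (plen p + plen q) 4 ltac:(discriminate)) as HJ; fold J in HJ.
  destruct (geodesic_between_split_index adj R1 x u J gR1 ltac:(lia))
    as (m & S1 & S2 & ER1 & gS1 & gS2 & HS1 & HR1).
  assert (Er' : r = pconcat S1 (pconcat S2 R2))
    by (rewrite Er, ER1; apply pconcat_assoc; eauto using geodesic_between_nonnil).
  assert (gR' : geodesic_between adj (pconcat S2 R2) m z).
  { rewrite Er' in gr; apply (geodesic_between_pconcat_inv adj _ _ x m z gr);
      [apply gS1 | apply pfirst_pconcat, gS2]. }
  assert (Hm : In m R1) by (rewrite ER1; apply in_pconcat_last, gS1).
  destruct (hyperbolic R1 g P1 (geo_triangle_intro adj _ _ _ x u v gR1 gg gP1))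
    as (_ & thin_R1 & _).
  destruct (thin_R1 m Hm) as [[u' [Hu' Hu'm]] | [w [Hw Hmw]]].
  - destruct (geodesic_between_of_dist adj u' m delta Hu'm) as [g' [gg' Lg']].
    destruct (geodesic_between_split_at adj P1 x v u' gP1 Hu')
      as (P11 & P12 & EP1 & gP11 & gP12 & HP1).
    assert (Ep' : p = pconcat P11 (pconcat P12 P2))
      by (rewrite Ep, EP1; apply pconcat_assoc; eauto using geodesic_between_nonnil).
    assert (gP' : geodesic_between adj (pconcat P12 P2) u' y).
    { rewrite Ep' in gp; apply (geodesic_between_pconcat_inv adj _ _ x u' y gp);
        [apply gP11 | apply pfirst_pconcat, gP12]. }
    apply (five_tessellation_chord_pr u' m P11 (pconcat P12 P2) S1 (pconcat S2 R2) g');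
      auto; lia.
  - (* The chord [h] from [m] to [v] has length at most [2 delta]: this is where the
       [2 delta] of the bound comes from. *)
    destruct (geodesic_between_of_dist adj m w delta Hmw) as [g'' [gg'' Lg'']].
    destruct (geodesic_between_split_at adj g u v w gg Hw) as (g1 & g2 & _ & _ & gg2 & Hg).
    destruct (geodesic_shortcut adj g'' g2 m w v) as [h [gh Lh]];
      eauto using geodesic_between_walk.
    apply (five_tessellation_chord_rp m S1 (pconcat S2 R2) h); auto; [|lia].
    apply le_INR in Lh; rewrite plus_INR in Lh.
    assert (INR (plen g2) <= INR (plen g)) by (apply le_INR; lia); lra.
Qed.

Lemma five_tessellation_near_r u : In u r -> dist_leR adj u v delta ->
  five_tessellation adj bound p q r.
Proof.
  intros Hu Huv.
  destruct (geodesic_between_of_dist adj u v delta Huv) as [g [gg Lg]].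
  destruct (geodesic_between_split_at adj r x z u gr Hu) as (R1 & R2 & Er & gR1 & gR2 & _).
  destruct (le_lt_dec (4 * plen R1) (plen p + plen q)).
  - apply (five_tessellation_chord_rp u R1 R2 g); auto; lra.
  - apply (five_tessellation_far_r u R1 R2 g); auto.
Qed.

End Midpoint.

Lemma five_tessellation_long_first : five_tessellation adj bound p q r.
Proof.
  pose proof (mul_div_bounds (plen p) 2 ltac:(discriminate)) as Hhalf.
  destruct (geodesic_between_split_index adj p x y (plen p / 2) gp ltac:(lia))
    as (v & P1 & P2 & Ep & gP1 & gP2 & HP1 & Hp).
  assert (Hv : In v p) by (rewrite Ep; apply in_pconcat_last, gP1).
  destruct (hyperbolic p q r (geo_triangle_intro adj _ _ _ x y z gp gq gr)) as (_ & thin_p & _).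
  destruct (thin_p v Hv) as [[u [Hu Huv]] | [w [Hw Hvw]]].
  - apply (five_tessellation_near_r v P1 P2 Ep gP1 gP2 ltac:(lia) u); assumption.
  - apply (five_tessellation_chord_pq v P1 P2 Ep gP1 gP2 ltac:(lia) w); assumption.
Qed.

End LongFirstSide.

Theorem lemma5p4 (V : Type) (adj : V -> V -> Prop) (delta : R) :
  0 <= delta -> strongly_hyperbolic adj delta ->
  forall p q r : list V, geo_triangle adj p q r ->
  exists Ts : list (list V * list V * list V),
    length Ts = 5%nat /\
    (forall p' q' r', In (p', q', r') Ts ->
       geo_triangle adj p' q' r' /\
       INR (tsize p' q' r') <= 3 / 4 * INR (tsize p q r) + 2 * delta + 1) /\
    tessellates_triangle Ts p q r.
Proof.
  intros delta_ge0 hyperbolic p q r HT.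
  destruct (geo_triangle_elim adj p q r HT) as (x & y & z & gp & gq & gr).
  destruct (le_lt_dec (plen q) (plen p)) as [q_le_p | p_lt_q].
  - exact (five_tessellation_long_first adj delta delta_ge0 hyperbolic x y z p q r gp gq gr q_le_p).
  - apply (five_tessellation_rev adj _ p q r y); [apply gp | apply gq |].
    replace (tsize p q r) with (tsize (rev q) (rev p) (rev r))
      by (unfold tsize; rewrite !plen_rev; apply Nat.add_comm).
    apply (five_tessellation_long_first (transp V adj) delta delta_ge0
             (strongly_hyperbolic_rev adj delta hyperbolic) z y x);
      try (apply geodesic_between_rev; assumption).
    rewrite !plen_rev; lia.
Qed.
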